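(* Assume $G$ is simply laced. Let $\varpi$ be a minuscule fundamental weight, $\bar\phi\in W/W_{P_\varpi}$, $\phi$ the minimal length element of $\bar\phi$, $\phi=s_{\gamma_1}\cdots s_{\gamma_n}$ a reduced expression with simple roots $\gamma_k$, $\beta_k=i(\gamma_k)$, $\alpha_1=\beta_1$ and $\alpha_k=s_{\beta_1}\cdots s_{\beta_{k-1}}(\beta_k)$. Let $i,x\in[1,n]$ with $\langle\alpha_i^\vee,\alpha_x\rangle=1$. Then for all $j\in[1,n]$, $\langle\alpha_i^\vee,s_{\alpha_x}(\alpha_j)\rangle\ge -1$.
   Context: $G$ is a semisimple algebraic group with maximal torus $T$, Borel subgroup $B$, simple roots $S$, Weyl group $W$ with longest element $w_0$; $s_\alpha$ is the reflection and $\alpha^\vee$ the coroot of a root $\alpha$. The Weyl involution $i$ sends a simple root $\gamma$ to $-w_0(\gamma)$. A fundamental weight $\varpi$ is minuscule if $\langle\alpha^\vee,\varpi\rangle\le1$ for all positive roots $\alpha$; $P_\varpi$ is the associated maximal parabolic subgroup and $W_{P_\varpi}$ its Weyl group. *)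

From HB Require Import structures.
From mathcomp Require Import all_boot all_order all_algebra.
Set Implicit Arguments. Unset Strict Implicit. Unset Printing Implicit Defensive.
Import Order.TTheory GRing.Theory Num.Theory.
Local Open Scope ring_scope.

(* Root system of a simply laced semisimple group, given by its Cartan matrix C
   (rank r).  Vectors of V = Q (x) (root lattice) = Q (x) (weight lattice) are
   rows of coordinates in the basis of simple roots; the W-invariant form is
   (u,v) = u C v^T. *)

Definition form (r : nat) (C : 'M[rat]_r) (u v : 'rV[rat]_r) : rat :=
  \sum_(i < r) \sum_(j < r) u 0 i * C i j * v 0 j.

Definition coroot_pair (r : nat) (C : 'M[rat]_r) (a v : 'rV[rat]_r) : rat :=
  2 * form C a v / form C a a.

Definition refl (r : nat) (C : 'M[rat]_r) (a v : 'rV[rat]_r) : 'rV[rat]_r :=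
  v - coroot_pair C a v *: a.

Definition sroot (r : nat) (i : 'I_r) : 'rV[rat]_r := \row_j (i == j)%:R.

Definition wact (r : nat) (C : 'M[rat]_r) (s : seq 'I_r) (v : 'rV[rat]_r) :=
  foldr (fun i w => refl C (sroot i) w) v s.

Definition weq (r : nat) (C : 'M[rat]_r) (s t : seq 'I_r) :=
  forall v, wact C s v = wact C t v.

Definition reduced (r : nat) (C : 'M[rat]_r) (s : seq 'I_r) :=
  forall t, weq C t s -> (size s <= size t)%N.

Definition is_root (r : nat) (C : 'M[rat]_r) (a : 'rV[rat]_r) :=
  exists (s : seq 'I_r) (i : 'I_r), a = wact C s (sroot i).

Definition is_pos_root (r : nat) (C : 'M[rat]_r) (a : 'rV[rat]_r) :=
  is_root C a /\ forall j, 0 <= a 0 j.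

Definition simply_laced_cartan (r : nat) (C : 'M[rat]_r) :=
  [/\ forall i j, C i j = C j i,
      forall i, C i i = 2,
      forall i j, i != j -> C i j = 0 \/ C i j = -1
    & forall v, v != 0 -> 0 < form C v v].

Definition is_fund_weight (r : nat) (C : 'M[rat]_r) (p : 'I_r) (w : 'rV[rat]_r) :=
  forall j, coroot_pair C (sroot j) w = (j == p)%:R.

Definition minuscule (r : nat) (C : 'M[rat]_r) (w : 'rV[rat]_r) :=
  forall a, is_pos_root C a -> coroot_pair C a w <= 1.

Definition longest_word (r : nat) (C : 'M[rat]_r) (g0 : seq 'I_r) :=
  reduced C g0 /\ forall s, exists t, weq C t s /\ (size t <= size g0)%N.

(* Weyl involution i(gamma) = - w_0(gamma) *)
Definition weyl_inv (r : nat) (C : 'M[rat]_r) (g0 : seq 'I_r) (i : 'I_r) :=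
  - wact C g0 (sroot i).

(* the element represented by gam has minimal length in its coset gam W_{P_p},
   W_{P_p} being generated by the s_j, j <> p *)
Definition min_coset_rep (r : nat) (C : 'M[rat]_r) (p : 'I_r) (gam : seq 'I_r) :=
  forall u : seq 'I_r, all (fun j => j != p) u ->
  forall t, weq C t (gam ++ u) -> (size gam <= size t)%N.

(* alpha_{k+1} = s_{beta_1} ... s_{beta_k} (beta_{k+1})  (0-based index k) *)
Definition alpha_seq (r : nat) (C : 'M[rat]_r) (betas : seq 'rV[rat]_r) (k : nat) :=
  foldr (fun b v => refl C b v) (nth 0 betas k) (take k betas).

(* Write phi = s_g1 ... s_gn and let d_k = s_g1 ... s_g(k-1) (g_k) be the
   inversion roots, so that alpha_k = w0 (- d_k) and all pairings may be computed
   with the d_k.  Reducedness and minimality of phi in phi W_P, together with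
   minusculity of varpi, force (d_k, phi varpi) = -1 for every k: the pairing
   (g_k, s_g(k+1) ... s_gn varpi) is the p-coordinate of a positive root, nonzero
   by minimality and at most 1 by minusculity.  Hence d = d_x - d_i - d_j pairs
   to 1 with phi varpi, so d is a nonzero element of the even root lattice and
   2 <= (d, d) = 4 - 2 ((d_x, d_j) - (d_i, d_j)) (as (d_i, d_x) = 1), which is
   the claim. *)

From mathcomp Require Import all_boot all_order all_algebra.
From mathcomp Require Import ring lra zify.
(* Imported after mathcomp so that [form] is the form of Defs, not the
   sesquilinear [form] of mathcomp. *)
From Pilot Require Import Defs.
Import Order.TTheory GRing.Theory Num.Theory.
Local Open Scope ring_scope.
Set Implicit Arguments. Unset Strict Implicit. Unset Printing Implicit Defensive.

Section BilinearForm.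
Variables (r : nat) (C : 'M[rat]_r).

Lemma formDl u u' v : form C (u + u') v = form C u v + form C u' v.
Proof.
rewrite /form -big_split; apply: eq_bigr => i _; rewrite -big_split.
by apply: eq_bigr => j _; rewrite mxE !mulrDl.
Qed.

Lemma formZl a u v : form C (a *: u) v = a * form C u v.
Proof.
rewrite /form mulr_sumr; apply: eq_bigr => i _; rewrite mulr_sumr.
by apply: eq_bigr => j _; rewrite mxE !mulrA.
Qed.

Lemma formNl u v : form C (- u) v = - form C u v.
Proof. by rewrite -scaleN1r formZl mulN1r. Qed.

Lemma formBl u u' v : form C (u - u') v = form C u v - form C u' v.
Proof. by rewrite formDl formNl. Qed.

Lemma form0l v : form C 0 v = 0.
Proof. by rewrite -(scale0r 0) formZl mul0r. Qed.

Lemma form_srootl i (v : 'rV[rat]_r) : form C (sroot i) v = \sum_j C i j * v 0 j.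
Proof.
rewrite /form (bigD1 i) //= [X in _ + X]big1 ?addr0 => [|k ki].
  by apply: eq_bigr => j _; rewrite mxE eqxx mul1r.
by apply: big1 => j _; rewrite mxE eq_sym (negbTE ki) !mul0r.
Qed.

Lemma form_sroot i j : form C (sroot i) (sroot j) = C i j.
Proof.
rewrite form_srootl (bigD1 j) //= [X in _ + X]big1 ?addr0 => [|k kj].
  by rewrite mxE eqxx mulr1.
by rewrite mxE eq_sym (negbTE kj) mulr0.
Qed.

Lemma form_decomp (u v : 'rV[rat]_r) : form C u v = \sum_i u 0 i * form C (sroot i) v.
Proof.
rewrite {1}/form; apply: eq_bigr => i _; rewrite form_srootl mulr_sumr.
by apply: eq_bigr => j _; rewrite mulrA.
Qed.

Lemma exists_sroot_form_gt0 (v : 'rV[rat]_r) : (forall k, 0 <= v 0 k) ->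
  0 < form C v v -> exists j, 0 < v 0 j /\ 0 < form C (sroot j) v.
Proof.
move=> v_ge0 vv_gt0.
pose descent j := (0 < v 0 j) && (0 < form C (sroot j) v).
have [j /andP[]|none] := pickP descent; first by exists j.
suff: form C v v <= 0 by rewrite leNgt vv_gt0.
rewrite form_decomp; apply: sumr_le0 => j _.
move: (none j) => /negbT; rewrite negb_and -!leNgt => /orP[vj_le0|].
  have ->: v 0 j = 0 by apply/eqP; rewrite eq_le vj_le0 v_ge0.
  by rewrite mul0r.
exact: mulr_ge0_le0.
Qed.

Hypothesis C_sym : forall i j, C i j = C j i.

Lemma formC u v : form C u v = form C v u.
Proof.
rewrite /form exchange_big; apply: eq_bigr => i _; apply: eq_bigr => j _.
by rewrite C_sym; ring.
Qed.

Lemma formDr u v v' : form C u (v + v') = form C u v + form C u v'.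
Proof. by rewrite !(formC u) formDl. Qed.

Lemma formZr a u v : form C u (a *: v) = a * form C u v.
Proof. by rewrite !(formC u) formZl. Qed.

Lemma formNr u v : form C u (- v) = - form C u v.
Proof. by rewrite !(formC u) formNl. Qed.

Lemma formBr u v v' : form C u (v - v') = form C u v - form C u v'.
Proof. by rewrite formDr formNr. Qed.

End BilinearForm.

Section Reflections.
Variables (r : nat) (C : 'M[rat]_r).
Hypothesis C_sym : forall i j, C i j = C j i.

Lemma reflD a v w : refl C a (v + w) = refl C a v + refl C a w.
Proof.
rewrite /refl /coroot_pair formDr //.
by apply/rowP => j; rewrite !mxE; ring.
Qed.

Lemma reflZ a c v : refl C a (c *: v) = c *: refl C a v.
Proof.
rewrite /refl /coroot_pair formZr //.
by apply/rowP => j; rewrite !mxE; ring.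
Qed.

Lemma reflN a v : refl C (- a) v = refl C a v.
Proof.
rewrite /refl /coroot_pair formNl formNr // formNl opprK.
by apply/rowP => j; rewrite !mxE; ring.
Qed.

Variable a : 'rV[rat]_r.
Hypothesis a_norm : form C a a = 2.

Lemma coroot_pair_norm2 v : coroot_pair C a v = form C a v.
Proof. by rewrite /coroot_pair a_norm mulrAC divff ?mul1r. Qed.

Lemma refl_norm2 v : refl C a v = v - form C a v *: a.
Proof. by rewrite /refl coroot_pair_norm2. Qed.

Lemma refl_isometry u v : form C (refl C a u) (refl C a v) = form C u v.
Proof.
rewrite !refl_norm2 formBl !formBr // !formZl !formZr // a_norm (formC C_sym u a).
ring.
Qed.

Lemma reflK : involutive (refl C a).
Proof.
move=> v; rewrite !refl_norm2 formBr // formZr // a_norm.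
by apply/rowP => j; rewrite !mxE; ring.
Qed.

End Reflections.

Section WeylAction.
Variables (r : nat) (C : 'M[rat]_r).
Hypotheses (C_sym : forall i j, C i j = C j i) (C_diag : forall i, C i i = 2).

Lemma sroot_norm i : form C (sroot i) (sroot i) = 2.
Proof. by rewrite form_sroot C_diag. Qed.

Lemma refl_sroot_coord j v k :
  refl C (sroot j) v 0 k = v 0 k - form C (sroot j) v * (j == k)%:R.
Proof. by rewrite refl_norm2 ?sroot_norm // !mxE. Qed.

Lemma wact_cat s t v : wact C (s ++ t) v = wact C s (wact C t v).
Proof. by rewrite /wact foldr_cat. Qed.

Lemma wact_isometry s u v : form C (wact C s u) (wact C s v) = form C u v.
Proof. by elim: s => //= i s IH; rewrite refl_isometry ?sroot_norm. Qed.

Lemma root_norm s i : form C (wact C s (sroot i)) (wact C s (sroot i)) = 2.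
Proof. by rewrite wact_isometry sroot_norm. Qed.

Lemma wactK s : cancel (wact C s) (wact C (rev s)).
Proof.
elim: s => //= i s IH v.
by rewrite rev_cons -cats1 wact_cat /= reflK ?sroot_norm.
Qed.

Lemma wactVK s : cancel (wact C (rev s)) (wact C s).
Proof. by move=> v; rewrite -{1}(revK s) wactK. Qed.

Lemma wactD s v w : wact C s (v + w) = wact C s v + wact C s w.
Proof. by elim: s => //= i s IH; rewrite IH reflD. Qed.

Lemma wactZ s c v : wact C s (c *: v) = c *: wact C s v.
Proof. by elim: s => //= i s IH; rewrite IH reflZ. Qed.

Lemma wactN s v : wact C s (- v) = - wact C s v.
Proof. by rewrite -scaleN1r wactZ scaleN1r. Qed.

Lemma wact_adj s u v : form C (wact C s u) v = form C u (wact C (rev s) v).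
Proof. by rewrite -{1}(wactVK s v) wact_isometry. Qed.

Lemma coroot_pair_wact s a v :
  coroot_pair C (wact C s a) (wact C s v) = coroot_pair C a v.
Proof. by rewrite /coroot_pair !wact_isometry. Qed.

Lemma refl_wact s a v : refl C (wact C s a) (wact C s v) = wact C s (refl C a v).
Proof. by rewrite /refl coroot_pair_wact wactD wactN wactZ. Qed.

Lemma wact_sroot_conj s i v :
  wact C (s ++ i :: rev s) v = refl C (wact C s (sroot i)) v.
Proof. by rewrite wact_cat /= -refl_wact wactVK. Qed.

Lemma wact_cons_rcons s a b : wact C (rev s) (sroot a) = sroot b ->
  wact C (a :: rcons s b) =1 wact C s.
Proof.
move=> ab v; rewrite -cats1 -cat1s !wact_cat /=.
have -> : sroot a = wact C s (sroot b) by rewrite -ab wactVK.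
by rewrite refl_wact reflK ?sroot_norm.
Qed.

(* s_(-w0 e_i) = w0 s_i w0^-1, so s_beta1 ... s_betak = w0 s_g1 ... s_gk w0^-1. *)
Lemma alpha_seq_weyl_inv g0 g k x0 : (k < size g)%N ->
  alpha_seq C (map (weyl_inv C g0) g) k =
  wact C g0 (- wact C (take k g) (sroot (nth x0 g k))).
Proof.
move=> kg.
have fold_betas t v : foldr (fun b v => refl C b v) v (map (weyl_inv C g0) t) =
                      wact C g0 (wact C t (wact C (rev g0) v)).
  elim: t => [|i t IH] /=; first by rewrite wactVK.
  by rewrite IH /weyl_inv reflN // refl_wact.
by rewrite /alpha_seq -map_take fold_betas (nth_map x0) // /weyl_inv wactN wactK wactN.
Qed.

End WeylAction.

Definition int_row r (v : 'rV[rat]_r) := forall j, v 0 j \is a Num.int.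

Lemma sroot_int_row r (i : 'I_r) : int_row (sroot i).
Proof. by move=> j; rewrite mxE; case: (i == j); rewrite ?rpred0 ?rpred1. Qed.

Lemma sum_delta r (j : 'I_r) : \sum_k (j == k)%:R = 1 :> rat.
Proof.
rewrite (bigD1 j) //= big1 => [|k kj]; first by rewrite eqxx addr0.
by rewrite eq_sym (negbTE kj).
Qed.

Lemma int_gt0_ge1 (x : rat) : x \is a Num.int -> 0 < x -> 1 <= x.
Proof.
move=> x_int x_gt0; rewrite -(ger0_norm (ltW x_gt0)).
by rewrite norm_intr_ge1 // gt_eqF.
Qed.

Lemma sum_sym_split r (f : 'I_r -> 'I_r -> rat) : (forall i j, f i j = f j i) ->
  \sum_(i < r) \sum_(j < r) f i j =
  \sum_(i < r) f i i + 2 * \sum_(i < r) \sum_(j < r | (j < i)%N) f i j.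
Proof.
move=> f_sym.
have split_row (i : 'I_r) : \sum_(j < r) f i j =
    f i i + (\sum_(j < r | (j < i)%N) f i j + \sum_(j < r | (i < j)%N) f i j).
  rewrite (bigD1 i) //= (bigID (fun j : 'I_r => (j < i)%N)) /=.
  by congr (_ + (_ + _)); apply: eq_bigl => j; rewrite -val_eqE /=; case: ltngtP.
rewrite (eq_bigr _ (fun i _ => split_row i)) !big_split /=.
suff -> : \sum_(i < r) \sum_(j < r | (i < j)%N) f i j =
          \sum_(i < r) \sum_(j < r | (j < i)%N) f i j by ring.
rewrite (eq_bigr _ (fun i _ => big_mkcond _ _)) exchange_big.
by apply: eq_bigr => j _; rewrite [RHS]big_mkcond; apply: eq_bigr => i _; rewrite f_sym.
Qed.

Section RootSystem.
Variables (r : nat) (C : 'M[rat]_r).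
Hypothesis C_cartan : simply_laced_cartan C.

Let C_sym : forall i j, C i j = C j i. Proof. by case: C_cartan. Qed.
Let C_diag : forall i, C i i = 2. Proof. by case: C_cartan. Qed.
Let form_gt0 (v : 'rV[rat]_r) : v != 0 -> 0 < form C v v.
Proof. by case: C_cartan => _ _ _; apply. Qed.

Let C_offdiag_le0 i j : i != j -> C i j <= 0.
Proof. by case: C_cartan => _ _ C_off _ ij; case: (C_off i j ij) => ->. Qed.

Let C_int i j : C i j \is a Num.int.
Proof.
have [<-|ij] := eqVneq i j; first by rewrite C_diag.
by case: C_cartan => _ _ C_off _; case: (C_off i j ij) => ->; rewrite ?rpredN.
Qed.

Lemma form_int u v : int_row u -> int_row v -> form C u v \is a Num.int.
Proof.
move=> u_int v_int; apply: rpred_sum => i _; apply: rpred_sum => j _.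
by rewrite !rpredM ?u_int ?v_int ?C_int.
Qed.

Lemma wact_int_row s v : int_row v -> int_row (wact C s v).
Proof.
move=> v_int; elim: s => //= i s IH j.
rewrite refl_norm2 ?sroot_norm // !mxE; apply: rpredB; first exact: IH.
by apply: rpredM; [apply: form_int; [apply: sroot_int_row|] | apply: rpred_nat].
Qed.

Lemma root_int_row s i : int_row (wact C s (sroot i)).
Proof. exact/wact_int_row/sroot_int_row. Qed.

Lemma form_even a : int_row a -> exists2 q, q \is a Num.int & form C a a = 2 * q.
Proof.
move=> a_int.
rewrite /form (@sum_sym_split _ (fun i j => a 0 i * C i j * a 0 j)); last first.
  by move=> i j; rewrite C_sym; ring.
exists (\sum_(i < r) a 0 i * a 0 i +
        \sum_(i < r) \sum_(j < r | (j < i)%N) a 0 i * C i j * a 0 j).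
  apply: rpredD; apply: rpred_sum => i _; first by rewrite rpredM ?a_int.
  by apply: rpred_sum => j _; rewrite !rpredM ?a_int ?C_int.
rewrite mulrDr; congr (_ + _); rewrite mulr_sumr.
by apply: eq_bigr => i _; rewrite C_diag; ring.
Qed.

Lemma norm_ge2 a : int_row a -> a != 0 -> 2 <= form C a a.
Proof.
move=> a_int a_neq0; have [q q_int aa] := form_even a_int.
have q_gt0 : 0 < q by move: (form_gt0 a_neq0); rewrite aa; lra.
by have := int_gt0_ge1 q_int q_gt0; rewrite aa; lra.
Qed.

(* Split v = a - b into its positive and negative parts: (a, b) <= 0, so if
   both parts were nonzero, (v, v) >= (a, a) + (b, b) >= 4. *)
Lemma norm2_coord_sign (v : 'rV[rat]_r) : int_row v -> form C v v = 2 ->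
  (forall j, 0 <= v 0 j) \/ (forall j, v 0 j <= 0).
Proof.
move=> v_int vv.
pose a := \row_j (if 0 <= v 0 j then v 0 j else 0).
pose b := \row_j (if 0 <= v 0 j then 0 else - v 0 j).
have v_ab : v = a - b by apply/rowP => j; rewrite !mxE; case: ifP => _; ring.
have a_ge0 j : 0 <= a 0 j by rewrite mxE; case: ifP.
have b_ge0 j : 0 <= b 0 j.
  by rewrite mxE; case: ifP => // /negbT; rewrite -ltNge oppr_ge0 => /ltW.
have ab_le0 : form C a b <= 0.
  apply: sumr_le0 => i _; apply: sumr_le0 => j _.
  have [<-|ij] := eqVneq i j; first by rewrite !mxE; case: ifP; rewrite ?mulr0 ?mul0r.
  by rewrite mulr_le0_ge0 ?mulr_ge0_le0 ?C_offdiag_le0.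
have [a0|a_neq0] := eqVneq a 0.
  right=> j; move/rowP/(_ j): a0; rewrite !mxE; case: ifP => [_ ->|] //.
  by move/negbT; rewrite -ltNge => /ltW.
have [b0|b_neq0] := eqVneq b 0.
  left=> j; move/rowP/(_ j): b0; rewrite !mxE; case: ifP => // v_lt0 /eqP.
  by rewrite oppr_eq0 => /eqP vj0; rewrite vj0 lexx in v_lt0.
have a_int : int_row a by move=> j; rewrite mxE; case: ifP; rewrite ?rpred0.
have b_int : int_row b by move=> j; rewrite mxE; case: ifP; rewrite ?rpred0 ?rpredN.
have := norm_ge2 a_int a_neq0; have := norm_ge2 b_int b_neq0.
move: vv; rewrite v_ab formBl !formBr // (formC C_sym b a); lra.
Qed.

Lemma norm2_support1 (v : 'rV[rat]_r) j : (forall k, k != j -> v 0 k = 0) ->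
  form C v v = 2 -> 0 <= v 0 j -> v = sroot j.
Proof.
move=> v_supp vv vj_ge0.
have v_j : v = v 0 j *: sroot j.
  apply/rowP => k; rewrite !mxE; have [<-|jk] := eqVneq j k; first by rewrite mulr1.
  by rewrite mulr0 v_supp // eq_sym.
move: vv; rewrite v_j formZl formZr // sroot_norm // => vv.
have -> : v 0 j = 1 by nra.
by rewrite scale1r.
Qed.

Lemma refl_sroot_nonneg (v : 'rV[rat]_r) j : int_row v -> form C v v = 2 ->
  (forall k, 0 <= v 0 k) -> v != sroot j -> forall k, 0 <= refl C (sroot j) v 0 k.
Proof.
move=> v_int vv v_ge0 v_neq.
have sv_int : int_row (refl C (sroot j) v) by exact: (wact_int_row [:: j]).
have := norm2_coord_sign sv_int; rewrite refl_isometry ?sroot_norm // => -[] // sv_le0.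
case/eqP: v_neq; apply: norm2_support1 => // k kj.
move: (sv_le0 k); rewrite refl_sroot_coord // eq_sym (negbTE kj) mulr0 subr0 => vk_le0.
by apply/eqP; rewrite eq_le vk_le0 v_ge0.
Qed.

(* If s_b sent the positive root (rev s)(e_a) to a negative one, that root
   would be e_b, and a :: s ++ [:: b] could be shortened to s. *)
Lemma reduced_suffix_root_nonneg pre a s u : reduced C (pre ++ a :: s ++ u) ->
  forall k, 0 <= wact C (rev s) (sroot a) 0 k.
Proof.
elim/last_ind: s u => [|s b IH] u red; first by move=> k; rewrite mxE ler0n.
have pos : forall k, 0 <= wact C (rev s) (sroot a) 0 k.
  by apply: (IH (b :: u)); rewrite -(cat_rcons b s u).
rewrite rev_rcons.
apply: (refl_sroot_nonneg (root_int_row _ _) (root_norm C_sym C_diag _ _) pos).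
apply/eqP => ab; have shorter : weq C (pre ++ s ++ u) (pre ++ a :: rcons s b ++ u).
  by move=> v; rewrite !wact_cat -cat_cons wact_cat wact_cons_rcons.
by move: (red _ shorter); rewrite !size_cat /= size_cat size_rcons; lia.
Qed.

(* Induction on the height: reflecting in a simple root e_j with v_j > 0 and
   (e_j, v) > 0 keeps v_p = 0 (as j != p) and lowers the height. *)
Lemma nonneg_root_parabolic p (v : 'rV[rat]_r) : int_row v -> form C v v = 2 ->
  (forall k, 0 <= v 0 k) -> v 0 p = 0 ->
  exists s i, [/\ all (fun j => j != p) s, i != p & v = wact C s (sroot i)].
Proof.
move=> v_int vv v_ge0 vp.
have [N] : exists N, \sum_k v 0 k < N%:R.
  by exists (Num.bound (\sum_k v 0 k)); apply/archi_boundP/sumr_ge0.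
elim: N v v_int vv v_ge0 vp => [|N IH] v v_int vv v_ge0 vp v_sum.
  by move: v_sum; rewrite ltNge sumr_ge0.
have vv_gt0 : 0 < form C v v by rewrite vv.
have [j [vj_gt0 jv_gt0]] := exists_sroot_form_gt0 v_ge0 vv_gt0.
have jp : j != p by apply: contraTneq vj_gt0 => ->; rewrite vp ltxx.
have [->|v_neq] := eqVneq v (sroot j); first by exists [::], j.
have jv_ge1 : 1 <= form C (sroot j) v.
  by apply: int_gt0_ge1 => //; apply: form_int => //; apply: sroot_int_row.
pose w := refl C (sroot j) v.
have w_sum : \sum_k w 0 k < N%:R.
  move: v_sum; rewrite (eq_bigr _ (fun k _ => refl_sroot_coord C_diag j v k)).
  rewrite sumrB -mulr_sumr sum_delta -natr1; lra.
have w_norm : form C w w = 2 by rewrite refl_isometry ?sroot_norm.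
have w_ge0 := refl_sroot_nonneg v_int vv v_ge0 v_neq.
have wp : w 0 p = 0 by rewrite refl_sroot_coord // (negbTE jp) mulr0 subr0.
have [s [i [sp ip w_eq]]] := IH w (wact_int_row [:: j] v_int) w_norm w_ge0 wp w_sum.
exists (j :: s), i; split => /=; rewrite ?jp //.
by rewrite -w_eq reflK ?sroot_norm.
Qed.

(* d = v - u - w pairs nontrivially with lam, so (d, d) >= 2. *)
Lemma coroot_pair_refl_ge lam u v w :
  int_row u -> int_row v -> int_row w ->
  form C u u = 2 -> form C v v = 2 -> form C w w = 2 ->
  form C u lam = form C v lam -> form C w lam = form C v lam -> form C v lam != 0 ->
  coroot_pair C u v = 1 -> -1 <= coroot_pair C u (refl C v w).
Proof.
move=> u_int v_int w_int uu vv ww ul wl vl_neq0.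
rewrite !coroot_pair_norm2 // refl_norm2 // formBr // formZr // => uv.
pose d := v - u - w.
have d_int : int_row d by move=> k; rewrite !mxE !rpredB.
have d_neq0 : d != 0.
  apply: contraNneq vl_neq0 => d0; apply/eqP.
  by move: (congr1 (form C ^~ lam) d0); rewrite /= form0l !formBl ul wl; lra.
have := norm_ge2 d_int d_neq0.
rewrite !formBl !formBr // uu vv ww (formC C_sym v u) (formC C_sym w u).
rewrite (formC C_sym w v) uv; lra.
Qed.

End RootSystem.

Section MinusculeCosetRep.
Variables (r : nat) (C : 'M[rat]_r) (p : 'I_r) (varpi : 'rV[rat]_r) (g : seq 'I_r).
Hypotheses (C_cartan : simply_laced_cartan C) (varpi_fund : is_fund_weight C p varpi).
Hypotheses (varpi_min : minuscule C varpi).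
Hypotheses (g_red : reduced C g) (g_min : min_coset_rep C p g).

Let C_sym : forall i j, C i j = C j i. Proof. by case: C_cartan. Qed.
Let C_diag : forall i, C i i = 2. Proof. by case: C_cartan. Qed.

Lemma form_fund_weight v : form C v varpi = v 0 p.
Proof.
have varpi_coord j : form C (sroot j) varpi = (j == p)%:R.
  by rewrite -(varpi_fund j) coroot_pair_norm2 ?sroot_norm.
rewrite form_decomp (bigD1 p) //= varpi_coord eqxx mulr1 big1 ?addr0 // => k kp.
by rewrite varpi_coord (negbTE kp) mulr0.
Qed.

Lemma inversion_root_nonneg pre a t : g = pre ++ a :: t ->
  forall k, 0 <= wact C (rev t) (sroot a) 0 k.
Proof.
move=> g_eq; apply: (reduced_suffix_root_nonneg C_cartan (pre := pre) (u := [::])).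
by rewrite cats0 -g_eq.
Qed.

(* Otherwise the reflection in this root lies in W_P, and composing g with it
   deletes the letter a. *)
Lemma inversion_root_coord_p pre a t : g = pre ++ a :: t ->
  wact C (rev t) (sroot a) 0 p != 0.
Proof.
move=> g_eq; apply/eqP => th_p.
have [s [i [s_p i_p th_eq]]] := nonneg_root_parabolic C_cartan (root_int_row C_cartan _ _)
  (root_norm C_sym C_diag _ _) (inversion_root_nonneg g_eq) th_p.
have sis_p : all (fun j => j != p) (s ++ i :: rev s) by rewrite all_cat /= i_p s_p all_rev.
have shorter : weq C (pre ++ t) (g ++ s ++ i :: rev s).
  move=> v; rewrite [RHS]wact_cat wact_sroot_conj // -th_eq -wact_sroot_conj //.
  by rewrite revK g_eq !wact_cat /= wactVK // reflK ?sroot_norm.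
by move: (g_min sis_p shorter); rewrite g_eq !size_cat /=; lia.
Qed.

Lemma form_sroot_suffix_weight pre a t : g = pre ++ a :: t ->
  form C (sroot a) (wact C t varpi) = 1.
Proof.
move=> g_eq; rewrite -[t in wact C t varpi]revK -wact_adj // form_fund_weight.
set th := wact C (rev t) (sroot a).
have th_ge1 : 1 <= th 0 p.
  apply: int_gt0_ge1; first exact: root_int_row.
  by rewrite lt_def (inversion_root_coord_p g_eq) (inversion_root_nonneg g_eq).
have : coroot_pair C th varpi <= 1.
  by apply: varpi_min; split; [exists (rev t), a | exact: inversion_root_nonneg g_eq].
rewrite coroot_pair_norm2 ?root_norm // form_fund_weight; lra.
Qed.

Lemma form_inversion_root_weight pre a t : g = pre ++ a :: t ->
  form C (wact C pre (sroot a)) (wact C g varpi) = -1.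
Proof.
move=> g_eq; rewrite [in wact C g _]g_eq wact_cat wact_isometry //= refl_norm2 ?sroot_norm //.
by rewrite formBr // formZr // sroot_norm // (form_sroot_suffix_weight g_eq); lra.
Qed.

End MinusculeCosetRep.

Unset Implicit Arguments. Set Strict Implicit.

Theorem mainTheorem6 (r : nat) (C : 'M[rat]_r) (p : 'I_r) (varpi : 'rV[rat]_r)
    (g0 gam : seq 'I_r) :
  simply_laced_cartan C ->
  is_fund_weight C p varpi -> minuscule C varpi ->
  longest_word C g0 ->
  reduced C gam -> min_coset_rep C p gam ->
  let betas := map (weyl_inv C g0) gam in
  let n := size gam in
  forall i x : nat, (i < n)%N -> (x < n)%N ->
  coroot_pair C (alpha_seq C betas i) (alpha_seq C betas x) = 1 ->
  forall j : nat, (j < n)%N ->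
  -1 <= coroot_pair C (alpha_seq C betas i)
          (refl C (alpha_seq C betas x) (alpha_seq C betas j)).
Proof.
move=> C_cartan varpi_fund varpi_min _ gam_red gam_min betas n i x i_n x_n ix j j_n.
have [C_sym C_diag _ _] := C_cartan.
have x0 : 'I_r by move: i_n; rewrite /n; case: (gam) => [|y l].
pose u k := - wact C (take k gam) (sroot (nth x0 gam k)).
have alpha k : (k < n)%N -> alpha_seq C betas k = wact C g0 (u k).
  exact: alpha_seq_weyl_inv.
have u_int k : int_row (u k) by move=> l; rewrite mxE rpredN root_int_row.
have u_norm k : form C (u k) (u k) = 2 by rewrite formNl formNr // opprK root_norm.
have u_weight k : (k < n)%N -> form C (u k) (wact C gam varpi) = 1.
  move=> k_n; rewrite formNl (form_inversion_root_weight C_cartan varpi_fund varpi_min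
    gam_red gam_min (t := drop k.+1 gam)) ?opprK //.
  by rewrite -drop_nth // cat_take_drop.
move: ix; rewrite !alpha // !coroot_pair_wact // refl_wact // coroot_pair_wact // => ix.
by apply: (coroot_pair_refl_ge C_cartan (lam := wact C gam varpi)); rewrite ?u_weight.
Qed.
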